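(* Let $(G,\cdot)$ be a loop with identity $e$ and let $(H,\cdot)$ be a non-trivial subloop of $G$. Suppose that $(xs\cdot z)s=x(sz\cdot s)$ for all $x,z\in G$ and all $s\in H$. Then: (i) $xs\cdot s^\rho=x$ for all $x\in G$ and $s\in H$; (ii) $x\cdot ss=xs\cdot s$ for all $x\in G$ and $s\in H$.
   Context: Juxtaposition binds more tightly than $\cdot$; e.g. $xs\cdot z$ means $(xs)z$. For $x$ in a loop with identity $e$, the right inverse $x^\rho$ is the unique element with $xx^\rho=e$. *)

Definition is_loop {G : Type} (op : G -> G -> G) (e : G) : Prop :=
  (forall x, op e x = x /\ op x e = x) /\
  (forall a b, exists! x, op a x = b) /\
  (forall a b, exists! y, op y a = b).

Definition is_subloop {G : Type} (op : G -> G -> G) (e : G) (H : G -> Prop) : Prop :=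
  H e /\
  (forall a b, H a -> H b -> H (op a b)) /\
  (forall a b x, H a -> H b -> op a x = b -> H x) /\
  (forall a b y, H a -> H b -> op y a = b -> H y).

Definition nontrivial {G : Type} (e : G) (H : G -> Prop) : Prop :=
  exists s, H s /\ s <> e.

Definition is_rinv {G : Type} (op : G -> G -> G) (e : G) (s r : G) : Prop :=
  op s r = e.


(* Both parts are specialisations of the identity (xs.z)s = x(sz.s):
   z = e gives (ii) directly, and z = s^rho turns it into (xs.s^rho)s = xs,
   from which (i) follows by cancelling s on the right. *)

Lemma loop_mulIr {G : Type} (op : G -> G -> G) (e : G) :
  is_loop op e -> forall s y w, op y s = op w s -> y = w.
Proof.
  intros [_ [_ Hdiv]] s y w E.
  destruct (Hdiv s (op w s)) as [u [_ Hu]].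
  transitivity u; [symmetry |]; apply Hu; [exact E | reflexivity].
Qed.

Section RightIdentity.

Variables (G : Type) (op : G -> G -> G) (e : G) (s : G).
Hypothesis (HG : is_loop op e).
Hypothesis (Hid_s : forall x z, op (op (op x s) z) s = op x (op (op s z) s)).

Lemma mulr_rinvK x r : is_rinv op e s r -> op (op x s) r = x.
Proof.
  intros Hr.
  destruct HG as [Hunit _].
  apply (loop_mulIr op e HG s).
  rewrite Hid_s. unfold is_rinv in Hr. rewrite Hr.
  now rewrite (proj1 (Hunit s)).
Qed.

Lemma mulr_sq_assoc x : op x (op s s) = op (op x s) s.
Proof.
  destruct HG as [Hunit _].
  pose proof (Hid_s x e) as E.
  rewrite (proj2 (Hunit (op x s))), (proj2 (Hunit s)) in E.
  now symmetry.
Qed.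

End RightIdentity.

Theorem theorem3p1 (G : Type) (op : G -> G -> G) (e : G) (H : G -> Prop)
  (HG : is_loop op e) (HH : is_subloop op e H) (Hnt : nontrivial e H)
  (Hid : forall x z s, H s ->
           op (op (op x s) z) s = op x (op (op s z) s)) :
  (forall x s r, H s -> is_rinv op e s r -> op (op x s) r = x) /\
  (forall x s, H s -> op x (op s s) = op (op x s) s).
Proof.
  split.
  - intros x s r Hs. exact (mulr_rinvK G op e s HG (fun x z => Hid x z s Hs) x r).
  - intros x s Hs. exact (mulr_sq_assoc G op e s HG (fun x z => Hid x z s Hs) x).
Qed.
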